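(* Let $f:X\to Y$ be a continuous map of sober topological spaces which is an epimorphism in the category of sober spaces and continuous maps, and suppose that $X$ is noetherian. Then $f$ is surjective.
   Context: A topological space is sober if every irreducible closed subset has a unique generic point. A topological space is noetherian if every descending chain of closed subsets stabilizes. *)

From mathcomp Require Import all_boot all_order.
From mathcomp Require Import all_classical all_reals all_analysis.
Set Implicit Arguments. Unset Strict Implicit. Unset Printing Implicit Defensive.
Local Open Scope classical_set_scope.

Definition irreducible_set {T : topologicalType} (A : set T) : Prop :=
  A !=set0 /\
  forall B C : set T, closed B -> closed C -> A `<=` B `|` C ->
    A `<=` B \/ A `<=` C.

Definition generic_point {T : topologicalType} (x : T) (A : set T) : Prop :=
  closure [set x] = A.

Definition sober (T : topologicalType) : Prop :=
  forall A : set T, closed A -> irreducible_set A ->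
    exists! x : T, generic_point x A.

Definition noetherian_space (T : topologicalType) : Prop :=
  forall C : nat -> set T, (forall n, closed (C n)) ->
    (forall n, C n.+1 `<=` C n) ->
    exists N, forall n, (N <= n)%N -> C n = C N.

Definition sober_epi {X Y : topologicalType} (f : X -> Y) : Prop :=
  forall (Z : topologicalType), sober Z ->
    forall g h : Y -> Z, continuous g -> continuous h ->
      g \o f = h \o f -> g = h.

From HB Require Import structures.
From mathcomp Require Import all_boot all_order.
From mathcomp Require Import all_classical all_reals all_analysis.
Set Implicit Arguments. Unset Strict Implicit. Unset Printing Implicit Defensive.
Local Open Scope classical_set_scope.

(* Suppose y is not in the image of f and let C be the closure of y.  By
   noetherian induction on the closed subsets F of the preimage of C, y is not
   in the closure of f(F): a minimal counterexample F is irreducible, so it has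
   a generic point x, and then f x and y have the same closure, whence f x = y
   by sobriety of Y.  Applied to F = f^-1(C), the open sets Y \ C and
   Y \ (C ∩ cl f(F)) differ at y but have the same preimage.  Their indicators
   into the Sierpinski space, which is sober, then contradict that f is an
   epimorphism. *)

Lemma closure_min (T : topologicalType) (A B : set T) :
  closed B -> A `<=` B -> closure A `<=` B.
Proof. by move=> cB sAB; rewrite closureE; exact: smallest_sub. Qed.

Lemma image_closure_subset (X Y : topologicalType) (f : X -> Y) (A : set X) :
  continuous f -> f @` closure A `<=` closure (f @` A).
Proof.
move=> cf; suff : closure A `<=` f @^-1` closure (f @` A) by move=> sA _ [a /sA ? <-].
apply: closure_min; first by move/continuous_closedP: cf; apply; exact: closed_closure.
by move=> a Aa; apply: subset_closure; exists a.
Qed.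

Inductive sierpinski := sier_top | sier_bot.

Definition bool_of_sier (s : sierpinski) : bool := if s is sier_top then true else false.
Definition sier_of_bool (b : bool) : sierpinski := if b then sier_top else sier_bot.
Lemma bool_of_sierK : cancel bool_of_sier sier_of_bool. Proof. by case. Qed.
HB.instance Definition _ := Choice.copy sierpinski (can_type bool_of_sierK).

Definition sier_open (U : set sierpinski) : Prop := U sier_bot -> U sier_top.

Lemma sier_openT : sier_open setT. Proof. by []. Qed.
Lemma sier_openI : setI_closed sier_open.
Proof. by move=> A B oA oB [/oA ? /oB ?]. Qed.
Lemma sier_open_bigcup (I : Type) (F : I -> set sierpinski) :
  (forall i, sier_open (F i)) -> sier_open (\bigcup_i F i).
Proof. by move=> oF [i _ Fi]; exists i => //; exact: oF. Qed.
HB.instance Definition _ :=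
  isOpenTopological.Build sierpinski sier_openT sier_openI sier_open_bigcup.

Lemma sier_openE (U : set sierpinski) : open U = sier_open U.
Proof. by []. Qed.

Lemma sier_closedP (A : set sierpinski) : closed A <-> (A sier_top -> A sier_bot).
Proof.
rewrite -openC sier_openE; split=> [oA At|AtAb Ab At]; last exact: Ab (AtAb At).
by apply: contrapT => Ab; exact: oA Ab At.
Qed.

Lemma sier_closure_top : closure [set sier_top] = setT.
Proof.
have /sier_closedP cl_bot := @closed_closure _ [set sier_top].
have cl_top : closure [set sier_top] sier_top by exact: subset_closure.
by apply/seteqP; split => // -[] _ //; exact: cl_bot.
Qed.

Lemma sier_closure_bot : closure [set sier_bot] = [set sier_bot].
Proof. by apply/esym/closure_id/sier_closedP. Qed.

Lemma sier_sober : sober sierpinski.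
Proof.
move=> A /sier_closedP cA [[a Aa] _].
have closure_neq : closure [set sier_top] <> closure [set sier_bot].
  rewrite sier_closure_top sier_closure_bot => eq_top_bot.
  by have : [set sier_bot] sier_top by rewrite -eq_top_bot.
have Ab : A sier_bot by case: a Aa => // /cA.
have [At|nAt] := pselect (A sier_top).
- have -> : A = closure [set sier_top].
    by rewrite sier_closure_top; apply/seteqP; split => // -[].
  exists sier_top; split => // -[] // /esym eq_cl; by case: (closure_neq eq_cl).
- have -> : A = closure [set sier_bot].
    by rewrite sier_closure_bot; apply/seteqP; split => -[].
  exists sier_bot; split => // -[] // eq_cl; by case: (closure_neq eq_cl).
Qed.

Definition sier_indicator {T : Type} (O : set T) (t : T) : sierpinski :=
  sier_of_bool `[< O t >].

Lemma sier_indicator_top (T : Type) (O : set T) (t : T) :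
  (sier_indicator O t = sier_top) = O t.
Proof.
rewrite /sier_indicator propeqE.
by case: (pselect (O t)) => [Ot|nOt]; [rewrite asboolT|rewrite asboolF].
Qed.

Lemma sier_indicator_continuous (T : topologicalType) (O : set T) :
  open O -> continuous (sier_indicator O).
Proof.
move=> oO; apply/continuousP => U; rewrite sier_openE => oU.
have [Ub|nUb] := pselect (U sier_bot).
  suff -> : sier_indicator O @^-1` U = setT by exact: openT.
  by apply/seteqP; split => // t _ /=; case: (sier_indicator O t) => //; exact: oU.
have [Ut|nUt] := pselect (U sier_top).
  suff -> : sier_indicator O @^-1` U = O by [].
  apply/seteqP; split => t /=; rewrite -(sier_indicator_top O t).
    by case: (sier_indicator O t).
  by move->.
suff -> : sier_indicator O @^-1` U = set0 by exact: open0.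
by apply/seteqP; split => // t /=; case: (sier_indicator O t).
Qed.

(* The Sierpinski space classifies open sets, so a sober epimorphism is
   injective on open sets through preimages. *)
Lemma sober_epi_open_preimage_inj (X Y : topologicalType) (f : X -> Y)
    (U V : set Y) :
  sober_epi f -> open U -> open V -> f @^-1` U = f @^-1` V -> U = V.
Proof.
move=> ef oU oV eqUV.
have indicator_eq : sier_indicator U = sier_indicator V.
  apply: (ef _ sier_sober); try exact: sier_indicator_continuous.
  apply: funext => x /=.
  have eqUVx : U (f x) = V (f x) := congr1 (@^~ x) eqUV.
  by rewrite /sier_indicator eqUVx.
by apply/funext => y; rewrite -!(sier_indicator_top _ y) indicator_eq.
Qed.

Lemma noetherian_closed_ind (X : topologicalType) (P : set X -> Prop) :
  noetherian_space X ->
  (forall F, closed F ->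
     (forall G, closed G -> G `<=` F -> G <> F -> P G) -> P F) ->
  forall F, closed F -> P F.
Proof.
move=> nX IH F0 cF0; apply: contrapT => nPF0.
pose bad := {F : set X | closed F /\ ~ P F}.
have smaller (F : bad) : {G : bad | sval G `<=` sval F /\ sval G <> sval F}.
  case: F => F [cF nPF].
  suff /cid [G [[cG nPG] sGF]] : exists G, (closed G /\ ~ P G) /\
      G `<=` F /\ G <> F by exists (exist _ G (conj cG nPG)).
  apply: contrapT => noG; apply: nPF; apply: IH => // G cG sGF nGF.
  by apply: contrapT => nPG; apply: noG; exists G.
pose chain n := iter n (fun F => sval (smaller F)) (exist _ F0 (conj cF0 nPF0)).
have [N stable] := nX (fun n => sval (chain n))
  (fun n => (svalP (chain n)).1) (fun n => (svalP (smaller (chain n))).1).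
exact: (svalP (smaller (chain N))).2 (stable N.+1 (leqnSn N)).
Qed.

Lemma irreducible_closure1 (T : topologicalType) (y : T) :
  irreducible_set (closure [set y]).
Proof.
split; first by exists y; exact: subset_closure.
move=> B C cB cC /(_ y (subset_closure (erefl y))) [By|Cy].
  by left; apply: closure_min => // _ ->.
by right; apply: closure_min => // _ ->.
Qed.

Lemma sober_closure1_inj (T : topologicalType) (a b : T) :
  sober T -> closure [set a] = closure [set b] -> a = b.
Proof.
move=> sT eq_ab.
have [c [_ uniq_c]] := sT _ (@closed_closure _ [set b]) (irreducible_closure1 b).
by rewrite -(uniq_c a eq_ab) (uniq_c b).
Qed.

Lemma closure_image_generic_point (X Y : topologicalType) (f : X -> Y)
    (x : X) (F : set X) :
  continuous f -> generic_point x F -> closure (f @` F) = closure [set f x].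
Proof.
move=> cf <-; apply/seteqP; split.
  apply: closure_min; first exact: closed_closure.
  by rewrite -image_set1; exact: image_closure_subset.
by apply: closureS => _ ->; exists x => //; exact: subset_closure.
Qed.

Lemma minimal_closure_image_irreducible (X Y : topologicalType) (f : X -> Y)
    (y : Y) (F : set X) :
  closed F -> closure (f @` F) y ->
  (forall G, closed G -> G `<=` F -> G <> F -> ~ closure (f @` G) y) ->
  irreducible_set F.
Proof.
move=> cF yF minF; split.
  apply: contrapT => F0; move: yF.
  suff -> : F = set0 by rewrite image_set0 closure0.
  by apply/seteqP; split => // x Fx; apply: F0; exists x.
move=> B D cB cD sF.
have [FB|nFB] := pselect (F `<=` B); first by left.
have [FD|nFD] := pselect (F `<=` D); first by right.
have proper_part (E : set X) : closed E -> ~ F `<=` E -> ~ closure (f @` (F `&` E)) y.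
  move=> cE nFE; apply: minF; first exact: closedI.
  - by move=> x [].
  - by move=> eqF; apply: nFE; rewrite -eqF => x [].
have eqF : F = (F `&` B) `|` (F `&` D).
  by apply/seteqP; split=> [x Fx|x [[]|[]] //]; case: (sF x Fx); [left|right].
exfalso; move: yF; rewrite eqF image_setU closureU => -[].
  exact: proper_part cB nFB.
exact: proper_part cD nFD.
Qed.

Lemma noetherian_closure_image_point (X Y : topologicalType) (f : X -> Y)
    (y : Y) :
  sober X -> noetherian_space X -> sober Y -> continuous f ->
  forall F, closed F -> f @` F `<=` closure [set y] -> closure (f @` F) y ->
  exists x, f x = y.
Proof.
move=> sX nX sY cf; apply: (noetherian_closed_ind nX) => F cF IH sFy yF.
have [[G [cG sGF nGF yG]]|noG] :=
    pselect (exists G, [/\ closed G, G `<=` F, G <> F & closure (f @` G) y]).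
  apply: (IH G cG sGF nGF) => // _ [x Gx <-]; apply: sFy; exists x => //.
  exact: sGF.
have irrF : irreducible_set F.
  apply: (minimal_closure_image_irreducible cF yF) => G cG sGF nGF yG.
  by apply: noG; exists G.
have [x [genx _]] := sX F cF irrF.
have Fx : F x by rewrite -genx; exact: subset_closure.
exists x; apply: sober_closure1_inj => //; apply/seteqP; split.
  by apply: closure_min; [exact: closed_closure|move=> _ ->; apply: sFy; exists x].
apply: closure_min; first exact: closed_closure.
by move=> _ ->; rewrite -(closure_image_generic_point cf genx).
Qed.

Theorem proposition1p7 (X Y : topologicalType) (f : X -> Y) :
  sober X -> sober Y -> continuous f -> sober_epi f -> noetherian_space X ->
  forall y : Y, exists x : X, f x = y.
Proof.
move=> sX sY cf ef nX y.
pose C := closure [set y].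
pose F := f @^-1` C.
pose D := closure (f @` F).
have cF : closed F by move/continuous_closedP: cf; apply; exact: closed_closure.
apply: (noetherian_closure_image_point sX nX sY cf cF); first exact: image_preimage_subset.
apply: contrapT => nDy.
have eqCD : ~` C = ~` (C `&` D).
  apply: (sober_epi_open_preimage_inj ef); try apply: closed_openC.
  - exact: closed_closure.
  - by apply: closedI; exact: closed_closure.
  apply/seteqP; split => x /= nCx; first by case.
  by move=> Cx; apply: nCx; split => //; apply: subset_closure; exists x.
have nCy : (~` C) y by rewrite eqCD => -[_ /nDy].
exact: nCy (subset_closure (erefl y)).
Qed.
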